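(* Assume the following statement holds: for every base $b>2$, every integer $n$ with $1<n<b$, and every symmetric $(n,b)$-palintiple with carries $c_k,\ldots,c_0$, one has $c_j\equiv 0 \pmod{n-1}$ for all $0\le j\le k$. Then, for integers $b>2$ and $1<n<b$, an $(n,b)$-palintiple is asymmetric if and only if $\gcd(b-n,n^2-1)\le n-1$ and $n+1$ does not divide $b$.
   Context: Let $b>2$ be an integer base and write $(d_k,d_{k-1},\ldots,d_0)_b=\sum_{j=0}^k d_j b^j$ with $0\le d_j<b$. A natural number $p=(d_k,\ldots,d_0)_b$ with $d_k\neq 0$ and $d_0\neq 0$ that is not a base-$b$ palindrome is an $(n,b)$-palintiple if $(d_k,\ldots,d_0)_b=n\,(d_0,d_1,\ldots,d_k)_b$ for an integer $n$ with $1<n<b$. Its carries $c_0,\ldots,c_{k+1}$ are the carries arising in the base-$b$ multiplication of $(d_0,\ldots,d_k)_b$ by $n$: $c_0=0$ and $n d_{k-j}+c_j=d_j+b\,c_{j+1}$ for $0\le j\le k$ (so $c_{k+1}=0$). The palintiple is symmetric if $c_j=c_{k-j}$ for all $0\le j\le k$, shifted-symmetric if $c_j=c_{k-j+1}$ for all $0\le j\le k$, and asymmetric if it is neither symmetric nor shifted-symmetric. *)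

From mathcomp Require Import all_boot.
Set Implicit Arguments. Unset Strict Implicit. Unset Printing Implicit Defensive.

(* A base-b digit string is represented little-endian as
   s = [:: d_0; d_1; ...; d_k], so k = (size s).-1 and
   (d_k,...,d_0)_b = \sum_j d_j b^j. *)

Definition digit (s : seq nat) (j : nat) : nat := nth 0 s j.

Definition topidx (s : seq nat) : nat := (size s).-1.

Definition numval (b : nat) (s : seq nat) : nat :=
  \sum_(j < size s) digit s j * b ^ j.

Definition palintiple (n b : nat) (s : seq nat) : Prop :=
  [/\ 0 < size s, all (fun d => d < b) s, 1 < n < b &
      [/\ digit s (topidx s) != 0, digit s 0 != 0, rev s != s &
           numval b s = n * numval b (rev s)]].

(* Carries of the base-b multiplication of (d_0,...,d_k)_b by n:
   c_0 = 0 and c_{j+1} = (n d_{k-j} + c_j) div b, i.e. the unique c_{j+1}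
   with n d_{k-j} + c_j = d'_j + b c_{j+1}, 0 <= d'_j < b. *)
Fixpoint carry (n b : nat) (s : seq nat) (j : nat) : nat :=
  match j with
  | 0 => 0
  | j'.+1 => (n * digit s (topidx s - j') + carry n b s j') %/ b
  end.

Definition symmetric_pal (n b : nat) (s : seq nat) : Prop :=
  forall j, j <= topidx s -> carry n b s j = carry n b s (topidx s - j).

Definition shifted_symmetric_pal (n b : nat) (s : seq nat) : Prop :=
  forall j, j <= topidx s -> carry n b s j = carry n b s (topidx s - j + 1).

Definition asymmetric_pal (n b : nat) (s : seq nat) : Prop :=
  ~ symmetric_pal n b s /\ ~ shifted_symmetric_pal n b s.

Definition symmetric_carries_divisible : Prop :=
  forall (b n : nat) (s : seq nat),
    2 < b -> 1 < n < b -> palintiple n b s -> symmetric_pal n b s ->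
    forall j, j <= topidx s -> carry n b s j = 0 %[mod n.-1].

From mathcomp Require Import all_boot zify.

(* Write c_j for the carries and k for the top index.  Since the product
   n (d_0,...,d_k)_b has the digits of p, every carry satisfies
   n d_{k-j} + c_j = d_j + b c_{j+1} with c_j < n.  Adding the equations at
   j and k - j shows c_j = c_{k-j} modulo n + 1, so n + 1 | b forces symmetry;
   conversely in a symmetric palintiple c_1 is 0 or n - 1 by hypothesis, and
   the end equations give b = (n + 1) d_0.  Similarly, if c_j = c_{k-j+1},
   combining the equations at j and k - j gives c_{k-j} = n b c_{j+1} modulo
   g = gcd(b - n, n^2 - 1), which is c_{j+1} modulo g, so g >= n forces shifted
   symmetry by induction; conversely shifted symmetry gives
   (n^2 - 1) d_0 = (b - n) c_1 with 0 < c_1 < n, whence g > n - 1. *)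

Lemma add_mul_small_inj q a a' x y :
  a < q -> a' < q -> a + q * x = a' + q * y -> a = a' /\ x = y.
Proof.
move=> ha ha' e.
have ea : a = a'.
  have := congr1 (modn^~ q) e.
  by rewrite !(addnC _ (q * _)) !(mulnC q) !modnMDl !modn_small.
by split=> //; nia.
Qed.

Lemma expansion_recl b m (x : nat -> nat) X :
  \sum_(i < m.+1) x i * b ^ i + X * b ^ m.+1 =
  x 0 + b * (\sum_(i < m) x i.+1 * b ^ i + X * b ^ m).
Proof.
rewrite big_ord_recl expn0 muln1 -addnA mulnDr big_distrr /= expnS mulnCA.
by congr (_ + (_ + _)); apply: eq_bigr => i _; rewrite expnS mulnCA.
Qed.

Lemma expansion_inj b m (x y : nat -> nat) X Y :
  (forall i, x i < b) -> (forall i, y i < b) ->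
  \sum_(i < m) x i * b ^ i + X * b ^ m = \sum_(i < m) y i * b ^ i + Y * b ^ m ->
  (forall i, i < m -> x i = y i) /\ X = Y.
Proof.
elim: m x y X Y => [|m IH] x y X Y hx hy.
  by rewrite !big_ord0 !expn0 !muln1.
rewrite !expansion_recl => /add_mul_small_inj [] // e0.
case/(IH (fun i => x i.+1) (fun i => y i.+1)) => // ehi eX.
by split=> // -[|i] // /ehi.
Qed.

Lemma digit_ltn b s : 0 < b -> all (fun d => d < b) s -> forall j, digit s j < b.
Proof.
move=> b0 /allP sb j; case: (ltnP j (size s)) => hj; first exact/sb/mem_nth.
by rewrite /digit nth_default.
Qed.

Section Carries.

Context {n b : nat} {s : seq nat}.

Local Notation k := (topidx s).
Local Notation c := (carry n b s).
Local Notation d := (digit s).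

Definition product_digit j := (n * d (k - j) + c j) %% b.

Lemma carry_product_digit j : n * d (k - j) + c j = product_digit j + b * c j.+1.
Proof. by rewrite /product_digit /= [LHS](divn_eq _ b) mulnC addnC. Qed.

Lemma mul_rev_expansion m :
  n * \sum_(i < m) d (k - i) * b ^ i =
  \sum_(i < m) product_digit i * b ^ i + c m * b ^ m.
Proof.
elim: m => [|m IH]; first by rewrite !big_ord0 muln0.
rewrite !big_ord_recr /= -/(c m.+1) mulnDr IH -!addnA expnS; congr (_ + _).
have := carry_product_digit m; nia.
Qed.

Hypothesis pal : palintiple n b s.

Lemma palintiple_ltn : 1 < n < b.
Proof. by case: pal. Qed.

Lemma digit_ltn_base j : d j < b.
Proof. by case: pal => _ sb /andP[_ nb] _; apply: digit_ltn sb _; lia. Qed.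

Lemma carry_ltn j : c j < n.
Proof.
have /andP[n1 nb] := palintiple_ltn.
elim: j => [|j IH] /=; first lia.
rewrite ltn_divLR; last lia.
by have := digit_ltn_base (k - j); nia.
Qed.

Lemma product_digitE_carry_top :
  (forall j, j <= k -> product_digit j = d j) /\ c k.+1 = 0.
Proof.
case: pal => s0 _ _ [_ _ _ hv].
have sz : size s = k.+1 by rewrite /topidx; lia.
have hrev : numval b (rev s) = \sum_(i < k.+1) d (k - i) * b ^ i.
  rewrite /numval size_rev sz; apply: eq_bigr => i _.
  by rewrite /digit nth_rev ?sz // subSS.
have := mul_rev_expansion k.+1; rewrite -hrev -hv /numval sz => e.
have pd_ltn i : product_digit i < b.
  by apply: ltn_pmod; have /andP[] := palintiple_ltn; lia.
have [] := @expansion_inj b k.+1 product_digit d (c k.+1) 0 pd_ltn digit_ltn_base.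
  by rewrite -e mul0n addn0.
by move=> dE ->; split=> // j hj; rewrite dE.
Qed.

Lemma carry_top : c k.+1 = 0.
Proof. by case: product_digitE_carry_top. Qed.

Lemma carry_step j : j <= k -> n * d (k - j) + c j = d j + b * c j.+1.
Proof.
by move=> hj; case: product_digitE_carry_top => dE _; rewrite carry_product_digit dE.
Qed.

Lemma topidx_gt0 : 0 < k.
Proof.
by case: pal => _ _ _ [_ _]; rewrite /topidx; case: s => [|x [|y t]] //=; rewrite eqxx.
Qed.

Lemma digit0_gt0 : 0 < d 0.
Proof. by case: pal => _ _ _ [_]; rewrite lt0n. Qed.

Lemma dvdn_symmetric_pal : n.+1 %| b -> symmetric_pal n b s.
Proof.
move=> /dvdnP [m bE] j hj.
have ej := carry_step j hj; have ekj := carry_step (k - j) (leq_subr j k).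
rewrite subKn // in ekj.
have [] // := @add_mul_small_inj n.+1 (c j) (c (k - j))
  (d (k - j) + m * c (k - j).+1) (d j + m * c j.+1)
  (ltnW (carry_ltn j)) (ltnW (carry_ltn _)).
(* Generalise first, so that rewriting [b] leaves the carries' parameter alone. *)
move: (c j) (c (k - j)) (c j.+1) (c (k - j).+1) (d j) (d (k - j)) ej ekj.
by move=> x y x' y' dj dkj; rewrite bE; nia.
Qed.

Lemma symmetric_pal_dvdn :
  c 1 = 0 %[mod n.-1] -> symmetric_pal n b s -> n.+1 %| b.
Proof.
move=> c1_mod sym.
have /andP[n1 _] := palintiple_ltn.
have ck0 : c k = 0 by move: (sym 0 (leq0n k)); rewrite subn0 => <-.
have e0 := carry_step 0 (leq0n k); have ek := carry_step k (leqnn k).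
rewrite subn0 addn0 in e0; rewrite subnn carry_top ck0 muln0 !addn0 in ek.
have c1_cases : c 1 = 0 \/ c 1 = n.-1.
  have /dvdnP [q c1E] : n.-1 %| c 1 by rewrite /dvdn c1_mod mod0n.
  have := carry_ltn 1; rewrite c1E.
  by case: q {c1E} => [|[|q]]; [left | right; rewrite mul1n | nia].
have d0 := digit0_gt0.
case: c1_cases => c1E; rewrite c1E -ek in e0; first nia.
by apply/dvdnP; exists (d 0); nia.
Qed.

Lemma gcd_shifted_symmetric_pal :
  n - 1 < gcdn (b - n) (n ^ 2 - 1) -> shifted_symmetric_pal n b s.
Proof.
set g := gcdn _ _ => ng.
have /andP[n1 nb] := palintiple_ltn.
have /dvdnP [t bE] : g %| b - n by exact: dvdn_gcdl.
have /dvdnP [u nE] : g %| n ^ 2 - 1 by exact: dvdn_gcdr.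
have {bE} bE : b = n + t * g by lia.
have {nE} nE : n * n = 1 + u * g by move: nE; rewrite expnS expn1; lia.
elim=> [|j IH] hj; first by rewrite subn0 addn1 carry_top.
move/(_ (ltnW hj)): IH; rewrite addn1 => IH.
have -> : k - j.+1 + 1 = k - j by lia.
have ej := carry_step j (ltnW hj); have ekj := carry_step (k - j) (leq_subr j k).
rewrite subKn ?(ltnW hj) // -IH in ekj.
have x'n := carry_ltn j.+1; have yn := carry_ltn (k - j).
move: (c j) (c j.+1) (c (k - j)) (d j) (d (k - j)) ej ekj x'n yn
  => x x' y dj dkj ej ekj x'n yn.
have e : n * n * dkj + n * x + y = dkj + b * x + n * b * x'.
  by have := congr1 (muln n) ej; rewrite mulnDr mulnA; nia.
have [] // := @add_mul_small_inj g x' y (t * x + u * x' + n * t * x') (u * dkj).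
- lia.
- lia.
rewrite nE bE in e; nia.
Qed.

Lemma shifted_symmetric_pal_gcd :
  shifted_symmetric_pal n b s -> n - 1 < gcdn (b - n) (n ^ 2 - 1).
Proof.
move=> shifted; have /andP[n1 nb] := palintiple_ltn.
have ck : c 1 = c k by rewrite (shifted 1 topidx_gt0) subnK // topidx_gt0.
have e0 := carry_step 0 (leq0n k); have ek := carry_step k (leqnn k).
rewrite subn0 addn0 in e0; rewrite subnn carry_top muln0 addn0 -ck in ek.
have d0 := digit0_gt0; have c1n := carry_ltn 1.
have key : (n ^ 2 - 1) * d 0 = (b - n) * c 1.
  by rewrite -ek in e0; rewrite !mulnBl expnS expn1; nia.
have c1_gt0 : 0 < c 1.
  by rewrite lt0n; apply/negP => /eqP c10; move: key; rewrite c10 muln0 expnS expn1; nia.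
have dvd_gc1 : n ^ 2 - 1 %| gcdn (b - n) (n ^ 2 - 1) * c 1.
  by rewrite muln_gcdl dvdn_gcd -key dvdn_mulr // dvdn_mulr.
have := dvdn_leq _ dvd_gc1; rewrite muln_gt0 gcdn_gt0 c1_gt0 subn_gt0 nb => /(_ isT).
by rewrite expnS expn1; nia.
Qed.

End Carries.

Theorem corollary2 :
  symmetric_carries_divisible ->
  forall (b n : nat) (s : seq nat),
    2 < b -> 1 < n < b -> palintiple n b s ->
    (asymmetric_pal n b s <->
       (gcdn (b - n) (n ^ 2 - 1) <= n - 1) /\ ~ (n.+1 %| b)).
Proof.
move=> divisible b n s b2 hn pal.
have sym_dvdn : symmetric_pal n b s -> n.+1 %| b.
  move=> sym; apply: (symmetric_pal_dvdn pal _ sym).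
  exact: divisible b n s b2 hn pal sym 1 (topidx_gt0 pal).
rewrite leqNgt; split.
- case=> not_sym not_shifted; split.
  + by apply/negP => /(gcd_shifted_symmetric_pal pal).
  + by move/(dvdn_symmetric_pal pal).
- case=> /negP not_gcd not_dvdn; split.
  + by move/sym_dvdn.
  + by move/(shifted_symmetric_pal_gcd pal).
Qed.
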